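(* For each $n\in\mathbb N$ there is a bijection $s\mapsto T_s$ from $\mathbb{T}_n(\emptyset)$ onto the set of $n$-trees (up to isomorphism) such that for all $s,t\in\mathbb{T}_n(\emptyset)$ we have $s\leq_{\mathbb{T}_n(\emptyset)}t$ if and only if there is an embedding of $n$-trees (satisfying Friedman's strong gap condition) from $T_s$ into $T_t$. In other words, $\mathbb{T}_n(\emptyset)$ is isomorphic to the set of $n$-trees ordered according to Friedman's strong gap condition.
   Context: A tree is a finite partial order $(T,\leq_T)$ with a unique minimal element (the root) such that for each $t\in T$ the set $\{s\mid s\leq_T t\}$ is linearly ordered; $s\wedge t$ denotes the $\leq_T$-maximal common lower bound. An $n$-tree is a tree $T$ with a labelling $l:T\to\{0,\dots,n-1\}$; isomorphic $n$-trees are identified. An embedding of $n$-trees $(S,l)\to(T,l')$ is a function $f:S\to T$ with $f(s\wedge t)=f(s)\wedge f(t)$ for all $s,t\in S$, such that (i) $l'(f(s))=l(s)$ for all $s\in S$; (ii) if $t$ is an immediate successor of $r$ in $S$ and $f(r)<_T s<_T f(t)$, then $l'(s)\geq l(t)$; (iii) if $s<_T f(\mathrm{root}(S))$, then $l'(s)\geq l(\mathrm{root}(S))$. For a partial order $X$, $M(X)$ is the set of finite multisets $[x_0,\dots,x_{m-1}]$ with elements from $X$, with $[x_0,\dots,x_{m-1}]\leq_{M(X)}[y_0,\dots,y_{k-1}]$ iff there is an injection $g:\{0,\dots,m-1\}\to\{0,\dots,k-1\}$ with $x_i\leq_X y_{g(i)}$ for all $i<m$. For $n\in\mathbb N$ and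 a partial order $X$, the set $\mathbb{T}_n(X)$ is generated by: $\overline x\in\mathbb{T}_n(X)$ for each $x\in X$; and $i\star\sigma\in\mathbb{T}_n(X)$ for each $\sigma=[t_0,\dots,t_{m-1}]\in M(\mathbb{T}_n(X))$ and each $i<n$. The relation $\leq_{\mathbb{T}_n(X)}$ is defined recursively (on the sum of heights, $h(\overline x)=0$, $h(i\star[t_0,\dots,t_{m-1}])=\max(\{0\}\cup\{h(t_k)+1\mid k<m\})$) by: $\overline x\leq t$ iff either $t=\overline y$ with $x\leq_X y$, or $t=j\star[t_0,\dots,t_{m-1}]$ and $\overline x\leq t_l$ for some $l<m$; and $i\star\sigma\leq t$ iff either $t=i\star\tau$ with $\sigma\leq_{M(\mathbb{T}_n(X))}\tau$, or $t=j\star[t_0,\dots,t_{m-1}]$ with $j\geq i$ and $i\star\sigma\leq t_l$ for some $l<m$. *)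

From mathcomp Require Import all_boot.
Set Implicit Arguments. Unset Strict Implicit. Unset Printing Implicit Defensive.

(* Since X is empty, the only terms are i * [t_0,...,t_{m-1}].
   A multiset is represented by a list; equality of terms is multiset
   equality (see [teq]). Labels are required to be < n via [wf]. *)
Inductive tm : Type := Node : nat -> seq tm -> tm.

Definition tm0 : tm := Node 0 [::].

Fixpoint wf (n : nat) (t : tm) : Prop :=
  match t with Node i s => i < n /\ (fix wfl (l : seq tm) : Prop :=
      match l with [::] => True | t :: l' => wf n t /\ wfl l' end) s end.

(* Multiset comparison M(X) relative to a relation R on elements:
   an injection g : {0..m-1} -> {0..k-1} with x_i R y_{g i}. *)
Definition mle (R : tm -> tm -> Prop) (s t : seq tm) : Prop :=
  exists g : 'I_(size s) -> 'I_(size t),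
    injective g /\ forall i : 'I_(size s), R (nth tm0 s i) (nth tm0 t (g i)).

Definition meq (R : tm -> tm -> Prop) (s t : seq tm) : Prop :=
  size s = size t /\
  exists g : 'I_(size s) -> 'I_(size t),
    injective g /\ forall i : 'I_(size s), R (nth tm0 s i) (nth tm0 t (g i)).

Inductive teq : tm -> tm -> Prop :=
| teq_node i s t : meq teq s t -> teq (Node i s) (Node i t).

Inductive tle : tm -> tm -> Prop :=
| tle_mul i s t : mle tle s t -> tle (Node i s) (Node i t)
| tle_sub i s j t (l : 'I_(size t)) : i <= j -> tle (Node i s) (nth tm0 t l) ->
    tle (Node i s) (Node j t).

Record ntree := NTree {
  nsize : nat;
  nle : rel 'I_nsize;
  nlab : 'I_nsize -> nat }.

Definition nlt (T : ntree) (x y : 'I_(nsize T)) : bool := nle x y && (x != y).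

Definition is_minimal (T : ntree) (r : 'I_(nsize T)) : Prop :=
  forall x, nle x r -> x = r.

Definition is_root (T : ntree) (r : 'I_(nsize T)) : Prop :=
  is_minimal r /\ forall r', is_minimal r' -> r' = r.

Definition is_ntree (n : nat) (T : ntree) : Prop :=
  [/\ [/\ reflexive (@nle T), antisymmetric (@nle T) & transitive (@nle T)],
      (exists r : 'I_(nsize T), is_root r),
      (forall t x y : 'I_(nsize T), nle x t -> nle y t -> nle x y || nle y x)
    & forall x : 'I_(nsize T), nlab x < n].

Definition is_meet (T : ntree) (s t m : 'I_(nsize T)) : Prop :=
  [/\ nle m s, nle m t & forall r, nle r s -> nle r t -> nle r m].

Definition imm_succ (T : ntree) (r t : 'I_(nsize T)) : Prop :=
  nlt r t /\ forall s, ~~ (nlt r s && nlt s t).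

Definition embedding (S T : ntree) (f : 'I_(nsize S) -> 'I_(nsize T)) : Prop :=
  [/\ injective f,
      (forall s t m, is_meet s t m -> is_meet (f s) (f t) (f m)),
      (forall s, nlab (f s) = nlab s),
      (forall r t, imm_succ r t -> forall s, nlt (f r) s -> nlt s (f t) ->
          nlab t <= nlab s)
    & (forall rt, is_root rt -> forall s, nlt s (f rt) -> nlab rt <= nlab s)].

Definition ntree_iso (S T : ntree) : Prop :=
  exists g : 'I_(nsize S) -> 'I_(nsize T),
    bijective g /\ (forall x y, nle (g x) (g y) = nle x y) /\
    (forall x, nlab (g x) = nlab x).
Arguments embedding S T f : clear implicits.

From mathcomp Require Import all_boot zify.
From Stdlib Require Import IndefiniteDescription.
Set Implicit Arguments. Unset Strict Implicit. Unset Printing Implicit Defensive.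

(* The tree of a term [s] has the addresses of [s] (sequences of child indices) as vertices,
   ordered by prefix and labelled by the labels of the corresponding subterms.  An embedding
   of such trees is the same thing as a map of addresses preserving labels and longest common
   prefixes and satisfying the two gap conditions.  Such a map either sends the root to the
   root, and then it splits into embeddings of the children along an injection, which is the
   clause [i * sigma <= i * tau]; or it sends the root into the subtree of some child [t_l],
   and the root gap condition says [i <= j], which is the clause [i * sigma <= t_l].  So by
   induction on the target, [s <= t] iff there is an embedding, and [s = t] iff there is an
   onto one, i.e. an isomorphism.  Conversely, an n-tree is isomorphic to the tree of its
   unfolding from the root, whose addresses are the downward paths of the tree. *)

(** * Prefixes *)

Section Prefix.
Variable T : eqType.
Implicit Types p q r : seq T.

Fixpoint lcp p q : seq T :=
  if (p, q) is (a :: p', b :: q') then (if a == b then a :: lcp p' q' else [::])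
  else [::].

Definition sprefix p q := prefix p q && (p != q).
Definition prefix1 p q := prefix p q && (size q == (size p).+1).

Lemma lcp_prefixl p q : prefix (lcp p q) p.
Proof. by elim: p q => [|a p IH] [|b q] //=; case: eqP => //= _; rewrite eqxx IH. Qed.

Lemma lcp_prefixr p q : prefix (lcp p q) q.
Proof. by elim: p q => [|a p IH] [|b q] //=; case: eqP => //= ->; rewrite eqxx IH. Qed.

Lemma lcp_cons a p q : lcp (a :: p) (a :: q) = a :: lcp p q.
Proof. by rewrite /= eqxx. Qed.

Lemma lcp_cons_neq a b p q : a != b -> lcp (a :: p) (b :: q) = [::].
Proof. by move=> /negPf /= ->. Qed.

Lemma lcps0 p : lcp p [::] = [::]. Proof. by case: p. Qed.

Lemma lcp_max r p q : prefix r p -> prefix r q -> prefix r (lcp p q).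
Proof.
elim: r p q => [|c r IH] [|a p] [|b q] //; rewrite ?prefix0s //.
rewrite !prefix_cons => /andP[/eqP <- hp] /andP[/eqP <- hq].
by rewrite lcp_cons prefix_cons eqxx IH.
Qed.

Lemma prefix_anti p q : prefix p q -> prefix q p -> p = q.
Proof.
by move=> /size_prefix hpq hqp; move: (hqp); rewrite prefixE => /eqP <-; rewrite take_oversize.
Qed.

Lemma lcp_eql p q : (lcp p q == p) = prefix p q.
Proof.
apply/eqP/idP => [<-|hpq]; first exact: lcp_prefixr.
by apply: prefix_anti (lcp_prefixl _ _) (lcp_max (prefix_refl p) hpq).
Qed.

Lemma prefix_total p q r : prefix p r -> prefix q r -> prefix p q || prefix q p.
Proof.
elim: p q r => [|a p IH] [|b q] [|c r] //; rewrite ?prefix0s ?orbT //.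
by rewrite !prefix_cons => /andP[/eqP -> hp] /andP[/eqP -> hq]; rewrite eqxx; apply: IH hp hq.
Qed.

Lemma sprefix_cons a p q : sprefix (a :: p) (a :: q) = sprefix p q.
Proof. by rewrite /sprefix prefix_cons eqseq_cons !eqxx. Qed.

Lemma prefix1_cons a p q : prefix1 (a :: p) (a :: q) = prefix1 p q.
Proof. by rewrite /prefix1 prefix_cons eqxx. Qed.

Lemma sprefixs0 p : sprefix p [::] = false. Proof. by case: p. Qed.

Lemma sprefix0s p : sprefix [::] p = (p != [::]). Proof. by case: p. Qed.

Lemma prefix1s0 p : prefix1 p [::] = false. Proof. by rewrite /prefix1 prefixs0; case: p. Qed.

Lemma prefix10s p : prefix1 [::] p = (size p == 1). Proof. by rewrite /prefix1 prefix0s. Qed.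

Lemma prefix_consl a p r : prefix (a :: p) r -> exists2 r', r = a :: r' & prefix p r'.
Proof. by case: r => [|b r] //; rewrite prefix_cons => /andP[/eqP <-]; exists r. Qed.

Lemma sprefix_consl a p r : sprefix (a :: p) r -> exists2 r', r = a :: r' & sprefix p r'.
Proof.
case/andP => /prefix_consl[r' -> hp]; rewrite eqseq_cons eqxx => hne.
by exists r'; rewrite /sprefix ?hp.
Qed.

Lemma sprefix_consr a p r :
  sprefix r (a :: p) -> r = [::] \/ exists2 r', r = a :: r' & sprefix r' p.
Proof.
case: r => [|b r]; first by left.
case/andP; rewrite prefix_cons eqseq_cons => /andP[/eqP -> hp]; rewrite eqxx => hne.
by right; exists r; rewrite /sprefix ?hp.
Qed.

Lemma prefix1_consl a p q : prefix1 (a :: p) q -> exists2 q', q = a :: q' & prefix1 p q'.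
Proof. by case/andP => /prefix_consl[q' -> hp] hs; exists q'; rewrite /prefix1 ?hp. Qed.

Lemma size_sprefix p q : sprefix p q -> size p < size q.
Proof.
case/andP => hpq hne; rewrite ltn_neqAle size_prefix // andbT.
by apply: contra hne => /eqP hs; move: hpq; rewrite prefixE hs take_size eq_sym.
Qed.

Lemma prefix1_sprefix p q : prefix1 p q -> sprefix p q.
Proof.
case/andP => hpq /eqP hs; rewrite /sprefix hpq /=.
by apply/eqP => hpq'; move: hs; rewrite hpq'; lia.
Qed.

Lemma prefix1_between p r q : prefix1 p q -> sprefix p r -> sprefix r q -> False.
Proof.
by case/andP => _ /eqP hq /size_sprefix hpr /size_sprefix hrq; move: hpr hrq; rewrite hq; lia.
Qed.

Lemma sprefix_between p q : sprefix p q -> ~~ prefix1 p q ->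
  exists2 r, sprefix p r & sprefix r q.
Proof.
move=> hspq; have hpq := proj1 (andP hspq).
rewrite /prefix1 hpq /= => /eqP hn1; have hlt : (size p).+1 < size q.
  by have := size_sprefix hspq; lia.
have hsz : size (take (size p).+1 q) = (size p).+1 by rewrite size_takel // ltnW.
exists (take (size p).+1 q); apply/andP; split.
- by move: hpq; rewrite !prefixE take_takel.
- by apply/eqP => /(congr1 size); rewrite hsz; lia.
- exact: prefix_take.
- by apply/eqP => /(congr1 size); rewrite hsz; lia.
Qed.

End Prefix.

(** * Addresses of terms *)

Section TmInd.
Variable P : tm -> Prop.
Hypothesis P_node : forall i l, (forall k, k < size l -> P (nth tm0 l k)) -> P (Node i l).

Fixpoint tm_nth_ind (t : tm) : P t :=
  match t with Node i l => P_node i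
    ((fix children (l : seq tm) : forall k, k < size l -> P (nth tm0 l k) :=
      match l return forall k, k < size l -> P (nth tm0 l k) with
      | [::] => fun k hk => False_ind _ (notF hk)
      | u :: l' => fun k => match k return k < size (u :: l') -> P (nth tm0 (u :: l') k) with
                  | 0 => fun _ => tm_nth_ind u
                  | k'.+1 => fun hk => children l' k' hk end end) l) end.
End TmInd.

Fixpoint is_addr (t : tm) (p : seq nat) : bool :=
  if p is k :: p' then let: Node _ l := t in (k < size l) && is_addr (nth tm0 l k) p'
  else true.

Fixpoint lab_at (t : tm) (p : seq nat) : nat :=
  if p is k :: p' then let: Node _ l := t in lab_at (nth tm0 l k) p'
  else let: Node i _ := t in i.

Fixpoint addrs (t : tm) : seq (seq nat) :=
  let: Node _ l := t in
  [::] :: [seq k :: p | k <- iota 0 (size l), p <- nth [::] (map addrs l) k].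

Lemma mem_addrs t p : (p \in addrs t) = is_addr t p.
Proof.
elim/tm_nth_ind: t p => i l IH [|k p] //=; rewrite in_cons /=.
apply/allpairsPdep/andP => [[k' [p' [+ + [-> ->]]]]|[hk hp]].
  by rewrite mem_iota /= => hk; rewrite (nth_map tm0) // IH.
by exists k, p; rewrite mem_iota (nth_map tm0) // IH.
Qed.

Lemma is_addr_prefix t p q : is_addr t q -> prefix p q -> is_addr t p.
Proof.
elim: p q t => [|k p IH] [|k' q] [i l] //=.
by move=> /andP[hk hq] /andP[/eqP -> hpq]; rewrite hk (IH _ _ hq hpq).
Qed.

Lemma wfE n i l : wf n (Node i l) <-> i < n /\ forall k, k < size l -> wf n (nth tm0 l k).
Proof.
rewrite /=; split=> -[-> hl]; split=> //.
  by elim: l hl => [|u l IH] //= [hu hl] [|k] //= hk; apply: IH.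
elim: l hl => [|u l IH] //= hl; split; first exact: (hl 0).
by apply: IH => k; apply: (hl k.+1).
Qed.

Lemma wf_lab_at n t p : wf n t -> is_addr t p -> lab_at t p < n.
Proof.
elim: p t => [|k p IH] [i l] /wfE[hi hl] //= /andP[hk hp].
exact: IH (hl _ hk) hp.
Qed.

Definition addr_seq (t : tm) := undup (addrs t).

Lemma addr_seq_gt0 t : 0 < size (addr_seq t).
Proof.
have : [::] \in addr_seq t by rewrite mem_undup mem_addrs.
by case: (addr_seq t).
Qed.

Definition addr t (x : 'I_(size (addr_seq t))) : seq nat := nth [::] (addr_seq t) x.
Arguments addr : clear implicits.

Definition vertex t (p : seq nat) : 'I_(size (addr_seq t)) :=
  insubd (Ordinal (addr_seq_gt0 t)) (index p (addr_seq t)).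

Definition tree_of (t : tm) : ntree :=
  @NTree (size (addr_seq t)) (fun x y => prefix (addr t x) (addr t y))
    (fun x => lab_at t (addr t x)).

Lemma is_addr_addr t x : is_addr t (addr t x).
Proof. by rewrite -mem_addrs -mem_undup mem_nth. Qed.

Lemma vertexK t p : is_addr t p -> addr t (vertex t p) = p.
Proof.
rewrite -mem_addrs -mem_undup => hp.
by rewrite /addr /vertex val_insubd index_mem hp nth_index.
Qed.

Lemma addrK t : cancel (addr t) (vertex t).
Proof.
move=> x; apply: val_inj; rewrite /vertex val_insubd index_uniq ?undup_uniq //.
by rewrite ltn_ord.
Qed.

Lemma addr_inj t : injective (addr t).
Proof. exact: can_inj (@addrK t). Qed.

Section TreeOf.
Variable t : tm.
Implicit Types x y m : 'I_(nsize (tree_of t)).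

Lemma nle_tree_of x y : nle x y = prefix (addr t x) (addr t y). Proof. by []. Qed.

Lemma nlab_tree_of x : nlab x = lab_at t (addr t x). Proof. by []. Qed.

Lemma nlt_tree_of x y : nlt x y = sprefix (addr t x) (addr t y).
Proof. by rewrite /nlt /sprefix (inj_eq (@addr_inj t)). Qed.

Lemma is_meet_tree_of x y m : is_meet x y m <-> addr t m = lcp (addr t x) (addr t y).
Proof.
split=> [[hmx hmy hmax]|hm].
  apply: prefix_anti; first exact: lcp_max.
  have hl : is_addr t (lcp (addr t x) (addr t y)).
    exact: is_addr_prefix (is_addr_addr x) (lcp_prefixl _ _).
  have := hmax (vertex t (lcp (addr t x) (addr t y))); rewrite !nle_tree_of vertexK //.
  by apply; [apply: lcp_prefixl | apply: lcp_prefixr].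
split=> [||r]; rewrite !nle_tree_of hm;
  [exact: lcp_prefixl | exact: lcp_prefixr | exact: lcp_max].
Qed.

Lemma imm_succ_tree_of x y : imm_succ x y <-> prefix1 (addr t x) (addr t y).
Proof.
split=> [[hxy hnone]|hxy].
  move: hxy; rewrite nlt_tree_of => hxy; apply/negPn/negP => /(sprefix_between hxy)[r hxr hry].
  have hr : is_addr t r by apply: is_addr_prefix (is_addr_addr y) (proj1 (andP hry)).
  by have := hnone (vertex t r); rewrite !nlt_tree_of vertexK // hxr hry.
split=> [|z]; first by rewrite nlt_tree_of prefix1_sprefix.
by rewrite !nlt_tree_of; apply/negP => /andP[]; apply: prefix1_between hxy.
Qed.

Lemma is_root_tree_of x : is_root x <-> addr t x = [::].
Proof.
have hroot_min x' : addr t x' = [::] -> is_minimal x'.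
  by move=> hx' z; rewrite nle_tree_of hx' prefixs0 => /eqP hz; apply: addr_inj; rewrite hz hx'.
have hv0 : addr t (vertex t [::]) = [::] by rewrite vertexK.
split=> [[_ hmin]|hx]; first by rewrite -(hmin _ (hroot_min _ hv0)).
split=> [|r hr]; first exact: hroot_min.
by apply/esym/hr; rewrite nle_tree_of hx prefix0s.
Qed.

Lemma tree_of_ntree n : wf n t -> is_ntree n (tree_of t).
Proof.
move=> ht; split.
- split=> [x|x y /andP[hxy hyx]|y x z]; first exact: prefix_refl.
    by apply: addr_inj; apply: prefix_anti hxy hyx.
  exact: prefix_trans.
- by exists (vertex t [::]); apply/is_root_tree_of; rewrite vertexK.
- by move=> z x y; apply: prefix_total.
- by move=> x; apply: wf_lab_at ht (is_addr_addr x).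
Qed.

End TreeOf.

(** * Address embeddings *)

Record addr_embedding (s t : tm) (phi : seq nat -> seq nat) : Prop := {
  aemb_addr : forall p, is_addr s p -> is_addr t (phi p);
  aemb_inj : forall p q, is_addr s p -> is_addr s q -> phi p = phi q -> p = q;
  aemb_lcp : forall p q, is_addr s p -> is_addr s q -> phi (lcp p q) = lcp (phi p) (phi q);
  aemb_lab : forall p, is_addr s p -> lab_at t (phi p) = lab_at s p;
  aemb_gap : forall p q r, is_addr s q -> prefix1 p q -> is_addr t r ->
    sprefix (phi p) r -> sprefix r (phi q) -> lab_at s q <= lab_at t r;
  aemb_root : forall r, is_addr t r -> sprefix r (phi [::]) -> lab_at s [::] <= lab_at t r }.

Definition addr_onto (s t : tm) (phi : seq nat -> seq nat) :=
  forall r, is_addr t r -> exists2 p, is_addr s p & phi p = r.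

Lemma aemb_prefix s t phi p q : addr_embedding s t phi -> is_addr s p -> is_addr s q ->
  prefix (phi p) (phi q) = prefix p q.
Proof.
case=> _ hinj hlcp _ _ _ hp hq; rewrite -!lcp_eql -hlcp //.
apply/eqP/eqP => [|-> //]; apply: hinj => //; exact: is_addr_prefix hp (lcp_prefixl _ _).
Qed.

Lemma inj_surj_bij (A B : finType) (f : A -> B) :
  injective f -> (forall y, exists x, f x = y) -> bijective f.
Proof.
move=> finj fsurj; apply: inj_card_bij => //; rewrite -(card_codom finj).
by apply/subset_leq_card/subsetP => y _; have [x <-] := fsurj y; apply: codom_f.
Qed.

Lemma iso_embedding (S T : ntree) (g : 'I_(nsize S) -> 'I_(nsize T)) :
  bijective g -> (forall x y, nle (g x) (g y) = nle x y) -> (forall x, nlab (g x) = nlab x) ->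
  embedding S T g.
Proof.
move=> gbij gle glab; have [g' gK g'K] := gbij.
have glt x y : nlt (g x) (g y) = nlt x y by rewrite /nlt gle (bij_eq gbij).
split=> //; first exact: bij_inj.
- move=> x y m [hmx hmy hmax]; split; rewrite ?gle // => r.
  by rewrite -(g'K r) !gle; apply: hmax.
- move=> r u [_ hnone] z; rewrite -(g'K z) !glt => hrz hzu.
  by have := hnone (g' z); rewrite hrz hzu.
- move=> rt [hmin _] z; rewrite -(g'K z) glt => /andP[hzr hne].
  by move: hne; rewrite (hmin _ hzr) eqxx.
Qed.

Section TreeOfEmbedding.
Variables s t : tm.

Lemma addr_embedding_of_embedding f : embedding (tree_of s) (tree_of t) f ->
  addr_embedding s t (fun p => addr t (f (vertex s p))).
Proof.
case=> finj fmeet flab fgap froot; split.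
- by move=> p _; apply: is_addr_addr.
- move=> p q hp hq /addr_inj /finj hpq.
  by rewrite -(vertexK hp) -(vertexK hq) hpq.
- move=> p q hp hq; have hl : is_addr s (lcp p q) by apply: is_addr_prefix hp (lcp_prefixl _ _).
  by apply/is_meet_tree_of/fmeet/is_meet_tree_of; rewrite !vertexK.
- by move=> p hp; rewrite -nlab_tree_of flab nlab_tree_of vertexK.
- move=> p q r hq hpq hr hpr hrq.
  have hp : is_addr s p by apply: is_addr_prefix hq (proj1 (andP hpq)).
  have hsucc : @imm_succ (tree_of s) (vertex s p) (vertex s q).
    by apply/imm_succ_tree_of; rewrite !vertexK.
  by have := fgap _ _ hsucc (vertex t r); rewrite !nlt_tree_of !nlab_tree_of !vertexK //; apply.
- move=> r hr hrt.
  have hroot : @is_root (tree_of s) (vertex s [::]) by apply/is_root_tree_of; rewrite vertexK.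
  by have := froot _ hroot (vertex t r); rewrite !nlt_tree_of !nlab_tree_of !vertexK //; apply.
Qed.

Lemma embedding_of_addr_embedding phi : addr_embedding s t phi ->
  embedding (tree_of s) (tree_of t) (fun x => vertex t (phi (addr s x))).
Proof.
move=> hphi; case: (hphi) => haddr hinj hlcp hlab hgap hroot.
have hphix x : is_addr t (phi (addr s x)) by apply/haddr/is_addr_addr.
split.
- move=> x y /(congr1 (addr t)); rewrite !vertexK // => /hinj hxy.
  by apply: addr_inj; apply: hxy; apply: is_addr_addr.
- move=> x y m /is_meet_tree_of hm; apply/is_meet_tree_of.
  by rewrite !vertexK // hm hlcp ?is_addr_addr.
- by move=> x; rewrite !nlab_tree_of vertexK // hlab ?is_addr_addr.
- move=> r u /imm_succ_tree_of hru z; rewrite !nlt_tree_of !nlab_tree_of !vertexK // => hrz hzu.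
  exact: hgap (is_addr_addr u) hru (is_addr_addr z) hrz hzu.
- move=> rt /is_root_tree_of hrt z; rewrite !nlt_tree_of !nlab_tree_of !vertexK // hrt => hz.
  exact: hroot (is_addr_addr z) hz.
Qed.

Lemma embedding_tree_ofP :
  (exists f, embedding (tree_of s) (tree_of t) f) <-> exists phi, addr_embedding s t phi.
Proof.
split=> [[f hf]|[phi hphi]]; eexists.
  exact: addr_embedding_of_embedding hf.
exact: embedding_of_addr_embedding hphi.
Qed.

Lemma iso_tree_ofP :
  ntree_iso (tree_of s) (tree_of t) <-> exists2 phi, addr_embedding s t phi & addr_onto s t phi.
Proof.
split=> [[g [gbij [gle glab]]]|[phi hphi honto]].
  exists (fun p => addr t (g (vertex s p))).
    exact/addr_embedding_of_embedding/iso_embedding.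
  move=> r hr; have [g' gK g'K] := gbij.
  by exists (addr s (g' (vertex t r))); rewrite ?is_addr_addr // addrK g'K vertexK.
have hf := embedding_of_addr_embedding hphi.
exists (fun x => vertex t (phi (addr s x))); split.
  apply: inj_surj_bij => [|y]; first by case: hf.
  have [p hp hpy] := honto _ (is_addr_addr y).
  by exists (vertex s p); rewrite vertexK // hpy addrK.
have hphix x : is_addr t (phi (addr s x)) by apply/(aemb_addr hphi)/is_addr_addr.
split=> [x y|x]; rewrite ?nle_tree_of ?nlab_tree_of !vertexK //.
  by rewrite (aemb_prefix hphi) ?is_addr_addr.
by rewrite (aemb_lab hphi) ?is_addr_addr.
Qed.

End TreeOfEmbedding.

Lemma addr_embedding_cons s j lt (l : 'I_(size lt)) psi :
  lab_at s [::] <= j -> addr_embedding s (nth tm0 lt l) psi ->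
  addr_embedding s (Node j lt) (fun p => val l :: psi p).
Proof.
move=> hsj [haddr hinj hlcp hlab hgap hroot]; split.
- by move=> p hp; rewrite /= ltn_ord haddr.
- by move=> p q hp hq [/hinj]; apply.
- by move=> p q hp hq; rewrite lcp_cons hlcp.
- exact: hlab.
- move=> p q r hq hpq /[swap] /sprefix_consl[r' -> hpr'] /andP[_ hr'].
  by rewrite sprefix_cons; apply: hgap hq hpq hr' hpr'.
- move=> r /[swap] /sprefix_consr[->|[r' -> hr']] // /andP[_ hr].
  exact: hroot hr hr'.
Qed.

Definition node_map m k (g : 'I_m -> 'I_k) (Phi : 'I_m -> seq nat -> seq nat) (p : seq nat) :=
  if p is a :: p' then (if insub a is Some o then val (g o) :: Phi o p' else [::]) else [::].

Lemma node_map_cons m k (g : 'I_m -> 'I_k) Phi (o : 'I_m) p :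
  node_map g Phi (val o :: p) = val (g o) :: Phi o p.
Proof. by rewrite /= valK. Qed.

Lemma is_addr_nodeP i ls p : is_addr (Node i ls) p ->
  p = [::] \/ exists o : 'I_(size ls), exists2 p', p = val o :: p' & is_addr (nth tm0 ls o) p'.
Proof. by case: p => [|k p]; [left | case/andP=> hk hp; right; exists (Ordinal hk), p]. Qed.

Section NodeMap.
Variables (i : nat) (ls lt : seq tm) (g : 'I_(size ls) -> 'I_(size lt)).
Variable Phi : 'I_(size ls) -> seq nat -> seq nat.

Lemma addr_embedding_node : injective g ->
  (forall o : 'I_(size ls), addr_embedding (nth tm0 ls o) (nth tm0 lt (g o)) (Phi o)) ->
  addr_embedding (Node i ls) (Node i lt) (node_map g Phi).
Proof.
move=> ginj hPhi; split.
- move=> p /is_addr_nodeP[->|[o [p' -> hp]]] //.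
  by rewrite node_map_cons /= ltn_ord (aemb_addr (hPhi o)).
- move=> p q /is_addr_nodeP[->|[o [p' -> hp]]] /is_addr_nodeP[->|[o' [q' -> hq]]] //;
    rewrite ?node_map_cons //= => -[/val_inj/ginj eoo]; subst o'.
  by move/(aemb_inj (hPhi o) hp hq) ->.
- move=> p q /is_addr_nodeP[->|[o [p' -> hp]]] /is_addr_nodeP[->|[o' [q' -> hq]]];
    rewrite ?lcps0 //.
  have [eoo|hoo] := eqVneq o o'.
    by subst o'; rewrite lcp_cons !node_map_cons lcp_cons (aemb_lcp (hPhi o) hp hq).
  rewrite !node_map_cons !lcp_cons_neq //.
  by apply: contra hoo => /eqP/val_inj/ginj->.
- move=> p /is_addr_nodeP[->|[o [p' -> hp]]] //.
  by rewrite node_map_cons /= (aemb_lab (hPhi o)).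
- move=> p q r /is_addr_nodeP[->|[o [q' -> hq]]]; first by rewrite prefix1s0.
  case: p => [|a p'].
    rewrite prefix10s; case: q' hq => [|? []] // hq _ /is_addr_nodeP[->|[o' [r' -> hr]]] //.
    rewrite node_map_cons => _ /sprefix_consr[//|[r'' [/val_inj eo <-] hr'']]; subst o'.
    exact: (aemb_root (hPhi o)) hr hr''.
  case/prefix1_consl => _ [<- <-] hpq.
  move=> /is_addr_nodeP[->|[o' [r' -> hr]]]; first by rewrite sprefixs0.
  rewrite !node_map_cons => /sprefix_consl[_ [/val_inj eo <-] hpr]; subst o'.
  by rewrite sprefix_cons; apply: (aemb_gap (hPhi o)) hq hpq hr hpr.
- by move=> r _; rewrite sprefixs0.
Qed.

Lemma addr_onto_node : (forall y, exists x, g x = y) ->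
  (forall o : 'I_(size ls), addr_onto (nth tm0 ls o) (nth tm0 lt (g o)) (Phi o)) ->
  addr_onto (Node i ls) (Node i lt) (node_map g Phi).
Proof.
move=> gsurj honto r /is_addr_nodeP[->|[o [r' -> hr]]]; first by exists [::].
have [x gx] := gsurj o; subst o; have [p' hp <-] := honto x _ hr.
by exists (val x :: p'); rewrite ?node_map_cons //= ltn_ord.
Qed.

End NodeMap.

Lemma aemb_prefix_root s t phi p :
  addr_embedding s t phi -> is_addr s p -> prefix (phi [::]) (phi p).
Proof. by move=> hphi hp; rewrite (aemb_prefix hphi) ?prefix0s. Qed.

Lemma addr_embedding_behead s j lt phi b psi :
  addr_embedding s (Node j lt) phi -> (forall p, is_addr s p -> phi p = b :: psi p) ->
  addr_embedding s (nth tm0 lt b) psi.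
Proof.
move=> [haddr hinj hlcp hlab hgap hroot] hphi.
have haddr' p : is_addr s p -> is_addr (Node j lt) (b :: psi p).
  by move=> hp; rewrite -hphi ?haddr.
split.
- by move=> p /haddr' /andP[].
- by move=> p q hp hq hpq; apply: hinj; rewrite ?hphi ?hpq.
- move=> p q hp hq; have hl := is_addr_prefix hp (lcp_prefixl p q).
  by have := hlcp _ _ hp hq; rewrite !hphi // lcp_cons => -[].
- by move=> p hp; rewrite -hlab // hphi.
- move=> p q r hq hpq hr; have hp := is_addr_prefix hq (proj1 (andP hpq)).
  have hbr : is_addr (Node j lt) (b :: r) by have /andP[hb _] := haddr' _ hp; apply/andP.
  by have := hgap p q _ hq hpq hbr; rewrite !hphi // !sprefix_cons.
- move=> r hr; have hbr : is_addr (Node j lt) (b :: r).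
    by have /andP[hb _] := haddr' _ (erefl : is_addr s [::]); apply/andP.
  by have := hroot _ hbr; rewrite hphi // sprefix_cons.
Qed.

Lemma addr_embedding_child i ls j lt phi k b psi :
  addr_embedding (Node i ls) (Node j lt) phi -> phi [::] = [::] -> k < size ls ->
  (forall p, is_addr (nth tm0 ls k) p -> phi (k :: p) = b :: psi p) ->
  addr_embedding (nth tm0 ls k) (nth tm0 lt b) psi.
Proof.
move=> [haddr hinj hlcp hlab hgap hroot] hphi0 hk hphi.
have hkp p : is_addr (nth tm0 ls k) p -> is_addr (Node i ls) (k :: p) by move=> hp; apply/andP.
have haddr' p : is_addr (nth tm0 ls k) p -> is_addr (Node j lt) (b :: psi p).
  by move=> hp; rewrite -hphi ?haddr ?hkp.
have hb : b < size lt by have /andP[] := haddr' [::] isT.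
split.
- by move=> p /haddr' /andP[].
- move=> p q hp hq hpq; have := hinj _ _ (hkp _ hp) (hkp _ hq).
  by rewrite !hphi // hpq => /(_ erefl) [].
- move=> p q hp hq; have hl := is_addr_prefix hp (lcp_prefixl p q).
  by have := hlcp _ _ (hkp _ hp) (hkp _ hq); rewrite lcp_cons !hphi // lcp_cons => -[].
- by move=> p hp; have := hlab _ (hkp _ hp); rewrite hphi //; apply.
- move=> p q r hq hpq hr; have hp := is_addr_prefix hq (proj1 (andP hpq)).
  have := hgap (k :: p) (k :: q) (b :: r) (hkp _ hq).
  by rewrite prefix1_cons !hphi // !sprefix_cons /= hb; apply.
- move=> r hr; have := hgap [::] [:: k] (b :: r) (hkp [::] isT).
  by rewrite prefix10s hphi0 hphi // sprefix0s sprefix_cons /= hb; apply.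
Qed.

Lemma addr_embedding_consE s j lt phi a w :
  addr_embedding s (Node j lt) phi -> phi [::] = a :: w ->
  lab_at s [::] <= j /\ exists l : 'I_(size lt), addr_embedding s (nth tm0 lt l) (behead \o phi).
Proof.
move=> hphi hphi0; split.
  by have := aemb_root hphi (erefl : is_addr (Node j lt) [::]); rewrite hphi0; apply.
have ha : a < size lt.
  by have := aemb_addr hphi (erefl : is_addr s [::]); rewrite hphi0 => /andP[].
exists (Ordinal ha); apply: (addr_embedding_behead hphi) => p hp /=.
by have := aemb_prefix_root hphi hp; rewrite hphi0 => /prefix_consl[r ->].
Qed.

Lemma aemb_head s t phi k p :
  addr_embedding s t phi -> phi [::] = [::] -> is_addr s (k :: p) ->
  phi (k :: p) = head 0 (phi [:: k]) :: behead (phi (k :: p)).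
Proof.
move=> hphi hphi0 hkp; have hk : is_addr s [:: k].
  by apply: is_addr_prefix hkp _; rewrite prefix_cons eqxx prefix0s.
have : phi [:: k] != [::].
  apply/eqP => hk0; have := aemb_inj hphi hk (erefl : is_addr s [::]).
  by rewrite hk0 hphi0 => /(_ erefl).
have : prefix (phi [:: k]) (phi (k :: p)).
  by rewrite (aemb_prefix hphi) // prefix_cons eqxx prefix0s.
by case: (phi [:: k]) => // a u /prefix_consl[r ->].
Qed.

Lemma addr_embedding_nodeE i ls j lt phi :
  addr_embedding (Node i ls) (Node j lt) phi -> phi [::] = [::] ->
  i = j /\ exists g : 'I_(size ls) -> 'I_(size lt), [/\ injective g,
    forall (o : 'I_(size ls)) p, is_addr (nth tm0 ls o) p ->
      phi (val o :: p) = val (g o) :: behead (phi (val o :: p))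
  & forall o : 'I_(size ls),
      addr_embedding (nth tm0 ls o) (nth tm0 lt (g o)) (fun p => behead (phi (val o :: p)))].
Proof.
move=> hphi hphi0; split.
  by have := aemb_lab hphi (erefl : is_addr _ [::]); rewrite hphi0.
have ho (o : 'I_(size ls)) : is_addr (Node i ls) [:: val o] by rewrite /= ltn_ord.
have hg (o : 'I_(size ls)) : head 0 (phi [:: val o]) < size lt.
  by have := aemb_addr hphi (ho o); rewrite (aemb_head hphi hphi0 (ho o)) => /andP[].
have hphio (o : 'I_(size ls)) p : is_addr (nth tm0 ls o) p ->
    phi (val o :: p) = head 0 (phi [:: val o]) :: behead (phi (val o :: p)).
  by move=> hp; apply: aemb_head hphi hphi0 _; rewrite /= ltn_ord.
exists (fun o => Ordinal (hg o)); split=> // [o o' /(congr1 val) /= hoo'|o].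
  have [//|hne] := eqVneq o o'; have := aemb_lcp hphi (ho o) (ho o').
  rewrite lcp_cons_neq // hphi0 (aemb_head hphi hphi0 (ho o)) (aemb_head hphi hphi0 (ho o')).
  by rewrite hoo' lcp_cons.
exact: addr_embedding_child hphi hphi0 (ltn_ord o) (hphio o).
Qed.

Lemma tle_nodeE i ls j lt : tle (Node i ls) (Node j lt) ->
  (i = j /\ mle tle ls lt) \/
  (i <= j /\ exists l : 'I_(size lt), tle (Node i ls) (nth tm0 lt l)).
Proof.
move Es: (Node i ls) => s; move Et: (Node j lt) => t h.
case: h Es Et => [i' ls' lt' hm|i' ls' j' lt' l hij hl] [? ?] [? ?]; subst; first by left.
by right; split=> //; exists l.
Qed.

Lemma teq_nodeE i ls j lt : teq (Node i ls) (Node j lt) -> i = j /\ meq teq ls lt.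
Proof.
move Es: (Node i ls) => s; move Et: (Node j lt) => t h.
by case: h Es Et => i' ls' lt' hm [? ?] [? ?]; subst.
Qed.

Lemma tle_addr_embeddingP s t : tle s t <-> exists phi, addr_embedding s t phi.
Proof.
split.
- elim/tm_nth_ind: t s => j lt IH [i ls] /tle_nodeE[[<- [g [ginj hg]]]|[hij [l hl]]].
    have /functional_choice[Phi hPhi] (o : 'I_(size ls)) :
        exists phi, addr_embedding (nth tm0 ls o) (nth tm0 lt (g o)) phi.
      exact: IH (ltn_ord _) _ (hg o).
    by exists (node_map g Phi); apply: addr_embedding_node.
  have [psi hpsi] := IH _ (ltn_ord l) _ hl.
  by exists (fun p => val l :: psi p); apply: addr_embedding_cons.
- case=> phi; elim/tm_nth_ind: t s phi => j lt IH [i ls] phi hphi.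
  case hphi0: (phi [::]) => [|a w].
    have [<- [g [ginj _ hchild]]] := addr_embedding_nodeE hphi hphi0.
    by apply: tle_mul; exists g; split=> // o; apply: IH (ltn_ord _) _ _ (hchild o).
  have [hij [l hl]] := addr_embedding_consE hphi hphi0.
  exact: tle_sub hij (IH _ (ltn_ord l) _ _ hl).
Qed.

Lemma teq_addr_isoP s t : teq s t <-> exists2 phi, addr_embedding s t phi & addr_onto s t phi.
Proof.
split.
- elim/tm_nth_ind: t s => j lt IH [i ls] /teq_nodeE[<- [hsize [g [ginj hg]]]].
  have /functional_choice[Phi hPhi] (o : 'I_(size ls)) : exists phi,
      addr_embedding (nth tm0 ls o) (nth tm0 lt (g o)) phi /\
      addr_onto (nth tm0 ls o) (nth tm0 lt (g o)) phi.
    by have [phi ? ?] := IH _ (ltn_ord (g o)) _ (hg o); exists phi.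
  have gsurj y : exists x, g x = y.
    have hcard : #|'I_(size lt)| <= #|'I_(size ls)| by rewrite !card_ord hsize.
    by have /codomP[x ->] := inj_card_onto ginj hcard y; exists x.
  exists (node_map g Phi); first by apply: addr_embedding_node => // o; case: (hPhi o).
  by apply: addr_onto_node => // o; case: (hPhi o).
- case=> phi; elim/tm_nth_ind: t s phi => j lt IH [i ls] phi hphi honto.
  case hphi0: (phi [::]) => [|a w]; last first.
    (* [[::]] has a preimage, so the root cannot be sent strictly below the root. *)
    have [p hp hp0] := honto [::] isT.
    by have := aemb_prefix_root hphi hp; rewrite hphi0 hp0.
  have [eij [g [ginj hgphi hchild]]] := addr_embedding_nodeE hphi hphi0; subst j.
  have hpreim (y : 'I_(size lt)) r : is_addr (nth tm0 lt y) r ->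
      exists o : 'I_(size ls),
        g o = y /\ exists2 p, is_addr (nth tm0 ls o) p & behead (phi (val o :: p)) = r.
    move=> hr; have hyr : is_addr (Node i lt) (val y :: r) by rewrite /= ltn_ord hr.
    have [p /is_addr_nodeP[->|[o [p' -> hp]]] hpr] := honto _ hyr.
      by rewrite hphi0 in hpr.
    by move: hpr; rewrite hgphi // => -[/val_inj <- <-]; exists o; split=> //; exists p'.
  apply: teq_node; split.
    have gsurj y : exists o, g o = y by have [o [? _]] := hpreim y [::] isT; exists o.
    by have := bij_eq_card (inj_surj_bij ginj gsurj); rewrite !card_ord.
  exists g; split=> // o; apply: IH (ltn_ord _) _ _ (hchild o) _ => r /hpreim[o' [/ginj eo hr]].
  by subst o'.
Qed.

(** * Unfolding an n-tree into a term *)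

Section Unfold.
Variables (n : nat) (T : ntree).
Hypothesis hT : is_ntree n T.
Local Notation V := 'I_(nsize T).

Definition is_child (x y : V) : bool := nlt x y && [forall z, ~~ (nlt x z && nlt z y)].

Definition children (x : V) : seq V := [seq y <- enum V | is_child x y].

Fixpoint is_path (x : V) (p : seq nat) : bool :=
  if p is k :: p' then (k < size (children x)) && is_path (nth x (children x) k) p' else true.

Fixpoint walk (x : V) (p : seq nat) : V :=
  if p is k :: p' then walk (nth x (children x) k) p' else x.

Fixpoint unfold_tm (d : nat) (x : V) : tm :=
  Node (nlab x) (if d is d'.+1 then map (unfold_tm d') (children x) else [::]).

Definition depth (x : V) := #|[set w | nlt w x]|.

Let nle_refl : reflexive (@nle T). Proof. by case: hT => -[]. Qed.
Let nle_anti : antisymmetric (@nle T). Proof. by case: hT => -[]. Qed.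
Let nle_trans : transitive (@nle T). Proof. by case: hT => -[]. Qed.
Let nle_total_below t (x y : V) : nle x t -> nle y t -> nle x y || nle y x.
Proof. by case: hT => _ _ /(_ t x y). Qed.

Lemma nlt_le_trans (x y z : V) : nlt x y -> nle y z -> nlt x z.
Proof.
case/andP => hxy hne hyz; rewrite /nlt (nle_trans hxy hyz) /=.
by apply: contra hne => /eqP hxz; subst z; apply/eqP/nle_anti; rewrite hxy hyz.
Qed.

Lemma nlt_irr (x : V) : nlt x x = false.
Proof. by rewrite /nlt eqxx andbF. Qed.

Lemma depth_lt (x y : V) : nlt x y -> depth x < depth y.
Proof.
move=> hxy; apply/proper_card/properP; split.
  by apply/subsetP => w; rewrite !inE => hw; apply: nlt_le_trans hw (proj1 (andP hxy)).
by exists x; rewrite !inE ?nlt_irr.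
Qed.

Lemma depth_bound (x : V) : depth x < nsize T.
Proof.
rewrite -[nsize T]card_ord -cardsT; apply/proper_card/properP; split; first exact: subsetT.
by exists x; rewrite !inE ?nlt_irr.
Qed.

Lemma is_child_nth (x : V) k : k < size (children x) -> is_child x (nth x (children x) k).
Proof. by move=> hk; have := mem_nth x hk; rewrite mem_filter => /andP[]. Qed.

Lemma nlt_child (x : V) k : k < size (children x) -> nlt x (nth x (children x) k).
Proof. by move/is_child_nth/andP => []. Qed.

Lemma is_child_below_eq (x c c' z : V) :
  is_child x c -> is_child x c' -> nle c z -> nle c' z -> c = c'.
Proof.
move=> /andP[hxc /forallP hc] /andP[hxc' /forallP hc'] hcz hc'z.
apply/eqP/negPn/negP => hne; case/orP: (nle_total_below hcz hc'z) => hle.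
  by have := hc' c; rewrite hxc /nlt hle hne.
by have := hc c'; rewrite hxc' /nlt hle eq_sym hne.
Qed.

Lemma walk_cat (x : V) p q : walk x (p ++ q) = walk (walk x p) q.
Proof. by elim: p x => [|k p IH] x //=. Qed.

Lemma is_path_cat (x : V) p q : is_path x (p ++ q) = is_path x p && is_path (walk x p) q.
Proof. by elim: p x => [|k p IH] x //=; rewrite IH andbA. Qed.

Lemma depth_walk (x : V) p : is_path x p -> depth x + size p <= depth (walk x p).
Proof.
elim: p x => [|k p IH] x /=; first by rewrite addn0.
by case/andP => hk /IH; have := depth_lt (nlt_child hk); lia.
Qed.

Lemma walk_ge (x : V) p : is_path x p -> nle x (walk x p).
Proof.
elim: p x => [|k p IH] x /=; first by rewrite nle_refl.
by case/andP => hk /IH; apply: nle_trans (proj1 (andP (nlt_child hk))).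
Qed.

Lemma walk_prefix (x : V) p q : is_path x q -> prefix p q -> nle (walk x p) (walk x q).
Proof.
move=> hq /prefixP[w eq]; subst q; rewrite walk_cat; apply: walk_ge.
by move: hq; rewrite is_path_cat => /andP[].
Qed.

Lemma prefix_walk (x : V) p q : is_path x p -> is_path x q ->
  nle (walk x p) (walk x q) -> prefix p q.
Proof.
elim: p x q => [|k p IH] x q; first by rewrite prefix0s.
move=> /= /andP[hk hp]; have hxc := nlt_child hk; have hcp := walk_ge hp.
case: q => [_ /(nle_trans hcp) hcx|k' q /= /andP[hk' hq] hpq].
  by have := nlt_le_trans hxc hcx; rewrite nlt_irr.
have hcc : nth x (children x) k = nth x (children x) k'.
  apply: is_child_below_eq (is_child_nth hk) (is_child_nth hk') (nle_trans hcp hpq) (walk_ge hq).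
have ekk : k = k' by apply/eqP; rewrite -(nth_uniq x hk hk' (filter_uniq _ (enum_uniq _))) hcc.
by subst k'; rewrite eqxx (IH _ _ hp) // hcc.
Qed.

Lemma walk_inj (x : V) p q : is_path x p -> is_path x q -> walk x p = walk x q -> p = q.
Proof.
move=> hp hq hpq.
by apply: prefix_anti; [apply: prefix_walk hp hq _ | apply: prefix_walk hq hp _]; rewrite hpq.
Qed.

Lemma is_addr_unfold_tm d (x : V) p : is_addr (unfold_tm d x) p = is_path x p && (size p <= d).
Proof.
elim: p d x => [|k p IH] [|d] x //=; first by rewrite andbF.
by rewrite size_map; case: ltnP => //= hk; rewrite (nth_map x) // IH.
Qed.

Lemma lab_at_unfold_tm d (x : V) p :
  is_addr (unfold_tm d x) p -> lab_at (unfold_tm d x) p = nlab (walk x p).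
Proof.
elim: p d x => [|k p IH] [|d] x //= /andP[hk hp].
by rewrite size_map in hk; rewrite (nth_map x) // in hp *; apply: IH.
Qed.

Lemma wf_unfold_tm d (x : V) : wf n (unfold_tm d x).
Proof.
have hlab (y : V) : nlab y < n by case: hT.
elim: d x => [|d IH] x; apply/wfE; split=> // k; rewrite size_map => hk.
by rewrite (nth_map x).
Qed.

Variable r : V.
Hypothesis r_root : is_root r.

Lemma root_le (y : V) : nle r y.
Proof.
elim: {y}_.+1 {-2}y (ltnSn (depth y)) => // h IH y hy.
have [/existsP[x hxy]|hmin] := boolP [exists x, nlt x y].
  by apply: nle_trans (IH x _) (proj1 (andP hxy)); have := depth_lt hxy; lia.
have ymin : is_minimal y.
  move=> x hxy; apply/eqP; apply: contraNT hmin => hne.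
  by apply/existsP; exists x; rewrite /nlt hxy.
by rewrite ((proj2 r_root) _ ymin) nle_refl.
Qed.

Lemma walk_root_onto (y : V) : exists2 p, is_path r p & walk r p = y.
Proof.
elim: {y}_.+1 {-2}y (ltnSn (depth y)) => // h IH y hy.
have [->|hne] := eqVneq y r; first by exists [::].
have hry : nlt r y by rewrite /nlt root_le eq_sym hne.
case: (@arg_maxnP _ r (fun z => nlt z y) depth hry) => z hzy hmax.
have [p hp hpz] := IH z (leq_trans (depth_lt hzy) hy).
have hyz : y \in children z.
  rewrite mem_filter mem_enum andbT /is_child hzy /=; apply/forallP => w.
  by apply/negP => /andP[/depth_lt hzw /hmax]; lia.
exists (rcons p (index y (children z))); rewrite -cats1 ?is_path_cat ?walk_cat hpz /=.
  by rewrite hp index_mem hyz.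
by rewrite nth_index.
Qed.

Lemma tree_of_unfold_tm_iso : ntree_iso (tree_of (unfold_tm (nsize T) r)) T.
Proof.
set s := unfold_tm (nsize T) r.
have path_addr p : is_addr s p -> is_path r p by rewrite is_addr_unfold_tm => /andP[].
have addr_path p : is_path r p -> is_addr s p.
  move=> hp; rewrite is_addr_unfold_tm hp /=.
  by have := depth_walk hp; have := depth_bound (walk r p); lia.
have hpath x : is_path r (addr s x) by apply/path_addr/is_addr_addr.
exists (fun x => walk r (addr s x)); split.
  apply: inj_surj_bij => [x y /walk_inj hxy|y]; first exact/addr_inj/hxy.
  by have [p hp <-] := walk_root_onto y; exists (vertex s p); rewrite vertexK ?addr_path.
split=> [x y|x]; last by rewrite nlab_tree_of lab_at_unfold_tm ?is_addr_addr.
by rewrite nle_tree_of; apply/idP/idP; [apply: prefix_walk | apply: walk_prefix].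
Qed.

End Unfold.

Theorem proposition5p3 (n : nat) :
  exists F : tm -> ntree,
    [/\ (forall s, wf n s -> is_ntree n (F s)),
        (forall s t, wf n s -> wf n t -> (teq s t <-> ntree_iso (F s) (F t))),
        (forall T, is_ntree n T -> exists s, wf n s /\ ntree_iso (F s) T)
      & (forall s t, wf n s -> wf n t ->
           (tle s t <-> exists f, embedding (F s) (F t) f))].
Proof.
exists tree_of; split.
- by move=> s; apply: tree_of_ntree.
- by move=> s t _ _; apply: iff_trans (teq_addr_isoP s t) (iff_sym (iso_tree_ofP s t)).
- move=> T hT; have [_ [r r_root] _ _] := hT.
  exists (unfold_tm (nsize T) r); split; first exact: wf_unfold_tm.
  exact: (tree_of_unfold_tm_iso hT r_root).
- by move=> s t _ _; apply: iff_trans (tle_addr_embeddingP s t) (iff_sym (embedding_tree_ofP s t)).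
Qed.
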